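(* Let $N$ be a positive integer, $L>0$, and $\zeta=(\zeta_0,\dots,\zeta_{N+2})\in\mathbb{R}^{N+3}$ with $\zeta_0>\zeta_1>\dots>\zeta_{N+1}>\zeta_{N+2}=0$. Let $W^\zeta$ and $w^\zeta$ be as defined in the context. Let $\bar y=(\bar y_0,\dots,\bar y_N)\in\mathbb{R}^{N+1}$. If $\bar y_k\geq 0$ for some $k\in\{0,\dots,N\}$, then the minimization problem defining $W^\zeta(\bar y)$ has an optimal solution $(\nu^*,\alpha^* )$ in which $\alpha^*$ has the form \[ \alpha^*=(\underbrace{0,\dots,0}_{m},\alpha^*_m,1-\alpha^*_m,\underbrace{0,\dots,0}_{N-m}) \] for some $m\in\{0,\dots,N\}$, and in addition $\alpha^*_{k+1}=\dots=\alpha^*_{N+1}=0$.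
   Context: Let $e_0,\dots,e_N$ denote the standard unit vectors of $\mathbb{R}^{N+1}$ (zero-based indexing). Define for $i=0,\dots,N+1$: $x_i=-\sum_{j=0}^{i-1}\frac{\zeta_j-\zeta_{i+1}}{\sqrt{\zeta_j-\zeta_{j+1}}}e_j\in\mathbb{R}^{N+1}$; $g_i=L\sqrt{\zeta_i-\zeta_{i+1}}\,e_i$ for $i=0,\dots,N$ and $g_{N+1}=0$; $f_i=\frac L2(\zeta_i+\zeta_{i+1})$ for $i=0,\dots,N$ and $f_{N+1}=0$. For $y\in\mathbb{R}^{N+1}$, $\nu\in\mathbb{R}^{N+1}$, $\alpha=(\alpha_0,\dots,\alpha_{N+1})\in\mathbb{R}^{N+2}$ let $w^\zeta(y,\nu,\alpha)=\frac L2\|y+\nu-\sum_{i=0}^{N+1}\alpha_i(x_i-\frac1Lg_i)\|^2+\sum_{i=0}^{N+1}\alpha_i(f_i-\frac1{2L}\|g_i\|^2)$, and $W^\zeta(y)=\min\{w^\zeta(y,\nu,\alpha):\nu\in\mathbb{R}^{N+1}_+,\ \alpha\in\Delta_{N+2}\}$, where $\mathbb{R}^{N+1}_+$ is the nonnegative orthant and $\Delta_{N+2}=\{\alpha\in\mathbb{R}^{N+2}:\alpha_i\geq0,\ \sum_i\alpha_i=1\}$. An optimal solution of $W^\zeta(y)$ is a minimizing pair $(\nu,\alpha)$. *)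

From mathcomp Require Import all_boot all_order all_algebra.
From mathcomp Require Import reals.
Unset Printing Implicit Defensive.
Import Order.TTheory GRing.Theory Num.Theory.
Local Open Scope ring_scope.

Section Defs.
Variable R : realType.

(* Vectors of R^n are functions 'I_n -> R; zeta is indexed by nat,
   only zeta 0 .. zeta (N+2) are relevant. *)

Definition sqnorm (n : nat) (v : 'I_n -> R) : R := \sum_(j < n) v j ^+ 2.

Definition xpt (N : nat) (zeta : nat -> R) (i : nat) : 'I_N.+1 -> R :=
  fun j => if (j < i)%N then
             - ((zeta j - zeta i.+1) / Num.sqrt (zeta j - zeta j.+1))
           else 0.

Definition gpt (N : nat) (L : R) (zeta : nat -> R) (i : nat) : 'I_N.+1 -> R :=
  fun j => if ((i <= N)%N && (val j == i)) then L * Num.sqrt (zeta i - zeta i.+1)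
           else 0.

Definition fval (N : nat) (L : R) (zeta : nat -> R) (i : nat) : R :=
  if (i <= N)%N then L / 2 * (zeta i + zeta i.+1) else 0.

Definition wfun (N : nat) (L : R) (zeta : nat -> R)
    (y nu : 'I_N.+1 -> R) (alpha : 'I_N.+2 -> R) : R :=
  L / 2 * sqnorm N.+1 (fun j : 'I_N.+1 => y j + nu j
     - \sum_(i < N.+2) alpha i * (xpt N zeta i j - L^-1 * gpt N L zeta i j))
  + \sum_(i < N.+2) alpha i *
      (fval N L zeta i - (2 * L)^-1 * sqnorm N.+1 (gpt N L zeta i)).

Definition feasible (N : nat) (nu : 'I_N.+1 -> R) (alpha : 'I_N.+2 -> R) : Prop :=
  (forall j, 0 <= nu j) /\ (forall i, 0 <= alpha i) /\ \sum_(i < N.+2) alpha i = 1.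

Definition optimal_W (N : nat) (L : R) (zeta : nat -> R) (y : 'I_N.+1 -> R)
    (nu : 'I_N.+1 -> R) (alpha : 'I_N.+2 -> R) : Prop :=
  feasible N nu alpha /\
  forall nu' alpha', feasible N nu' alpha' ->
    wfun N L zeta y nu alpha <= wfun N L zeta y nu' alpha'.

End Defs.

From mathcomp Require Import all_boot all_order all_algebra.
From mathcomp Require Import all_classical all_reals all_analysis.
From mathcomp Require Import ring lra.
Import numFieldNormedType.Exports.
Import Order.TTheory GRing.Theory Num.Theory.

(* The problem is a convex quadratic program over (nonnegative orthant) x (simplex), so a
   feasible point satisfying the KKT conditions is optimal.  For fixed alpha the best nu is
   the positive part of sum_i alpha_i (x_i - g_i/L) - y; the residual r is then nonnegative
   and the gradient G_i of the objective in alpha_i has increments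
   G_{i+1} - G_i = L (zeta_{i+1} - zeta_{i+2}) (P_{i+1} - 1), where
   P_m = sum_{j <= m} r_j / sqrt (zeta_j - zeta_{j+1}) is nondecreasing in m.  Hence G is
   minimal at any m with P_m <= 1 <= P_{m+1}, and alpha = (1 - a) e_m + a e_{m+1} is optimal
   as soon as moreover P_{m+1} = 1 or a = 0.  Such (m, a) exist below k: y_k >= 0 gives
   P_k >= 1 at alpha = e_k; take the least m with P_m >= 1 at alpha = e_m and, if needed,
   move the weight from e_{m-1} to e_m, where P_m crosses 1 by the intermediate value
   theorem. *)

Set Implicit Arguments.
Unset Strict Implicit.
Local Open Scope ring_scope.

Section SimplexQuadratic.
Context {R : realFieldType} {n p : nat}.
Variables (L : R) (X : nat -> 'I_n -> R) (C : nat -> R) (y : 'I_n -> R).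

Definition resid (nu : 'I_n -> R) (alpha : 'I_p -> R) (j : 'I_n) : R :=
  y j + nu j - \sum_(i < p) alpha i * X i j.

Definition qobj (nu : 'I_n -> R) (alpha : 'I_p -> R) : R :=
  L / 2 * \sum_(j < n) resid nu alpha j ^+ 2 + \sum_(i < p) alpha i * C i.

Definition qgrad (nu : 'I_n -> R) (alpha : 'I_p -> R) (i : nat) : R :=
  C i - L * \sum_(j < n) resid nu alpha j * X i j.

Lemma qobj_ge_linearization nu alpha nu' alpha' : 0 <= L ->
  qobj nu alpha + L * \sum_(j < n) resid nu alpha j * (nu' j - nu j)
    + \sum_(i < p) (alpha' i - alpha i) * qgrad nu alpha i <= qobj nu' alpha'.
Proof.
move=> L_ge0; set e := resid nu alpha; set e' := resid nu' alpha'.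
set cross := \sum_(i < p) (alpha' i - alpha i) * \sum_(j < n) e j * X i j.
have sq_le : \sum_j e j ^+ 2 + 2 * \sum_j e j * (e' j - e j) <= \sum_j e' j ^+ 2.
  rewrite mulr_sumr -big_split /=; apply: ler_sum => j _.
  have := sqr_ge0 (e' j - e j); lra.
have e'_sub_e j : e' j - e j = (nu' j - nu j) - \sum_(i < p) (alpha' i - alpha i) * X i j.
  rewrite /e' /e /resid; under [in RHS]eq_bigr do rewrite mulrBl.
  rewrite sumrB; ring.
have lin : \sum_j e j * (e' j - e j) = \sum_j e j * (nu' j - nu j) - cross.
  under eq_bigr do rewrite e'_sub_e mulrBr.
  rewrite sumrB; congr (_ - _); under eq_bigr do rewrite mulr_sumr.
  rewrite exchange_big; apply: eq_bigr => i _ /=; rewrite mulr_sumr.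
  by apply: eq_bigr => j _; rewrite mulrCA.
have grad : \sum_(i < p) (alpha' i - alpha i) * qgrad nu alpha i =
    \sum_(i < p) alpha' i * C i - \sum_(i < p) alpha i * C i - L * cross.
  rewrite /cross mulr_sumr -!sumrB; apply: eq_bigr => i _; rewrite /qgrad -/e; ring.
rewrite /qobj -/e -/e' grad.
have half_L_ge0 : 0 <= L / 2 by lra.
have := ler_wpM2l half_L_ge0 sq_le; rewrite lin; lra.
Qed.

Lemma qobj_min_of_kkt nu alpha lam : 0 <= L ->
  (forall j, 0 <= resid nu alpha j) -> (forall j, nu j * resid nu alpha j = 0) ->
  \sum_(i < p) alpha i = 1 ->
  (forall i : 'I_p, lam <= qgrad nu alpha i) ->
  (forall i : 'I_p, alpha i * qgrad nu alpha i = alpha i * lam) ->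
  forall nu' alpha', (forall j, 0 <= nu' j) -> (forall i, 0 <= alpha' i) ->
  \sum_(i < p) alpha' i = 1 -> qobj nu alpha <= qobj nu' alpha'.
Proof.
move=> L_ge0 resid_ge0 nu_slack sum1 lam_le alpha_slack nu' alpha' nu'_ge0 alpha'_ge0 sum1'.
apply: le_trans (qobj_ge_linearization nu alpha nu' alpha' L_ge0); rewrite -addrA lerDl.
apply: addr_ge0.
  apply: mulr_ge0 => //; apply: sumr_ge0 => j _.
  by rewrite mulrBr [_ * nu j]mulrC nu_slack subr0 mulr_ge0.
have sum_lam (a : 'I_p -> R) : \sum_(i < p) a i = 1 -> \sum_(i < p) a i * lam = lam.
  by move=> sum_a; rewrite -big_distrl /= sum_a mul1r.
under eq_bigr do rewrite mulrBl; rewrite sumrB subr_ge0.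
under [X in X <= _]eq_bigr do rewrite alpha_slack.
rewrite sum_lam // -{1}(sum_lam _ sum1').
by apply: ler_sum => i _; rewrite ler_wpM2l.
Qed.

End SimplexQuadratic.

Lemma min_at_valley (R : numDomainType) (g : nat -> R) (m n : nat) :
  (forall l, (m <= l < n)%N -> g l <= g l.+1) ->
  (forall l, (l < m)%N -> g l.+1 <= g l) ->
  forall i, (i <= n)%N -> g m <= g i.
Proof.
move=> up down i le_in; case: (leqP m i) => [le_mi|lt_im].
  rewrite -subr_ge0 -(telescope_sumr g le_mi) big_nat_cond.
  apply: sumr_ge0 => l /andP[/andP[le_ml lt_li] _]; rewrite subr_ge0 up //.
  by rewrite le_ml (leq_trans lt_li).
rewrite -subr_ge0 -opprB -(telescope_sumr g (ltnW lt_im)) -sumrN big_nat_cond.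
apply: sumr_ge0 => l /andP[/andP[_ lt_lm] _]; rewrite oppr_ge0 subr_le0.
exact: down.
Qed.

Section TwoPointOptimum.
Variables (R : realType) (N : nat) (L : R) (zeta : nat -> R) (y : 'I_N.+1 -> R).
Hypothesis L_gt0 : 0 < L.
Hypothesis zeta_decr : forall i : nat, (i <= N.+1)%N -> zeta i.+1 < zeta i.
Hypothesis zeta_last : zeta N.+2 = 0.

Definition xshift (i : nat) (j : 'I_N.+1) : R :=
  xpt R N zeta i j - L^-1 * gpt R N L zeta i j.

Definition fshift (i : nat) : R :=
  fval R N L zeta i - (2 * L)^-1 * sqnorm R N.+1 (gpt R N L zeta i).

Lemma wfunE : wfun R N L zeta y = qobj L xshift fshift y.
Proof. by []. Qed.

Definition gap (j : nat) : R := zeta j - zeta j.+1.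
Definition rgap (j : nat) : R := Num.sqrt (gap j).

Lemma gap_gt0 j : (j <= N.+1)%N -> 0 < gap j.
Proof. by move=> le_jN; rewrite subr_gt0 zeta_decr. Qed.

Lemma rgap_gt0 j : (j <= N.+1)%N -> 0 < rgap j.
Proof. by move=> le_jN; rewrite sqrtr_gt0 gap_gt0. Qed.

Lemma rgap_sqr j : (j <= N.+1)%N -> rgap j ^+ 2 = gap j.
Proof. by move=> le_jN; rewrite sqr_sqrtr // ltW // gap_gt0. Qed.

Lemma xshiftE i (j : 'I_N.+1) :
  xshift i j = if (j <= i)%N then (zeta i.+1 - zeta j) / rgap j else 0.
Proof.
have le_jN : (j <= N.+1)%N by exact: ltnW.
rewrite /xshift /xpt /gpt; case: (ltngtP j i) => [lt_ji|lt_ij|eq_ji].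
- by rewrite andbF mulr0 subr0 -mulNr opprB.
- by rewrite andbF mulr0 subr0.
- rewrite -eq_ji andbT -ltnS ltn_ord /=.
  rewrite sub0r mulKf ?gt_eqF // -/(rgap j) -opprB -/(gap j).
  by rewrite -(rgap_sqr le_jN) expr2 mulNr mulfK ?gt_eqF ?rgap_gt0.
Qed.

Lemma fshiftE i : (i <= N.+1)%N -> fshift i = L * zeta i.+1.
Proof.
move=> le_iN1; rewrite /fshift /fval /sqnorm; case: (leqP i N) => [le_iN|lt_Ni].
  rewrite (bigD1 (Ordinal (le_iN : (i < N.+1)%N))) //= big1 => [|j ne_ji]; last first.
    by move: ne_ji; rewrite /gpt le_iN -val_eqE /= => /negbTE ->; rewrite expr0n.
  rewrite /gpt le_iN eqxx /= addr0 exprMn -/(gap i) -/(rgap i) rgap_sqr // /gap.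
  by field; rewrite gt_eqF.
have -> : i = N.+1 by apply/eqP; rewrite eqn_leq le_iN1.
by rewrite zeta_last mulr0 big1 ?mulr0 ?subr0 // => j _; rewrite /gpt ltnn expr0n.
Qed.

Lemma xshift_succ i j :
  xshift i.+1 j - xshift i j = if (j <= i.+1)%N then - (gap i.+1 / rgap j) else 0.
Proof.
rewrite !xshiftE /gap; case: (leqP j i) => [le_ji|lt_ij].
  by rewrite (leqW le_ji); ring.
case: (leqP j i.+1) => [le_ji1|_]; last by rewrite subrr.
have -> : val j = i.+1 by apply/eqP; rewrite eqn_leq le_ji1.
by rewrite subr0 -mulNr opprB.
Qed.

Local Notation grad := (qgrad L xshift fshift y).

Definition ratio (nu : 'I_N.+1 -> R) (alpha : 'I_N.+2 -> R) (j : 'I_N.+1) : R :=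
  resid xshift y nu alpha j / rgap j.

Definition prefix (nu : 'I_N.+1 -> R) (alpha : 'I_N.+2 -> R) (m : nat) : R :=
  \sum_(j < N.+1 | (j <= m)%N) ratio nu alpha j.

Lemma prefix_mono nu alpha m m' : (forall j, 0 <= ratio nu alpha j) ->
  (m <= m')%N -> prefix nu alpha m <= prefix nu alpha m'.
Proof.
move=> ratio_ge0 le_mm'; rewrite /prefix big_mkcond [X in _ <= X]big_mkcond.
apply: ler_sum => j _.
by case: ifP => [le_jm|_]; [rewrite (leq_trans le_jm le_mm') | case: ifP].
Qed.

Lemma qgrad_succ nu alpha i : (i <= N)%N ->
  grad nu alpha i.+1 - grad nu alpha i = L * gap i.+1 * (prefix nu alpha i.+1 - 1).
Proof.
move=> le_iN.
have cross : \sum_j resid xshift y nu alpha j * xshift i.+1 j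
    - \sum_j resid xshift y nu alpha j * xshift i j = - (gap i.+1 * prefix nu alpha i.+1).
  rewrite /prefix mulr_sumr -[in RHS]sumrN [in RHS]big_mkcond -sumrB.
  apply: eq_bigr => j _.
  by rewrite -mulrBr xshift_succ /ratio; case: ifP => _; [ring | rewrite mulr0].
have regroup (a b c d : R) : (a - L * c) - (b - L * d) = a - b - L * (c - d) by ring.
rewrite /qgrad !fshiftE ?(leqW le_iN) // regroup cross /gap; ring.
Qed.

Lemma qgrad_min nu alpha m : (forall j, 0 <= ratio nu alpha j) -> (m <= N)%N ->
  ((0 < m)%N -> prefix nu alpha m <= 1) -> 1 <= prefix nu alpha m.+1 ->
  forall i, (i <= N.+1)%N -> grad nu alpha m <= grad nu alpha i.
Proof.
move=> ratio_ge0 le_mN prefix_m prefix_m1.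
have coef_ge0 l : (l <= N)%N -> 0 <= L * gap l.+1.
  by move=> le_lN; rewrite mulr_ge0 ?ltW ?gap_gt0.
apply: min_at_valley => l.
  case/andP=> le_ml lt_lN; rewrite -subr_ge0 qgrad_succ //.
  rewrite mulr_ge0 ?coef_ge0 // subr_ge0.
  by apply: le_trans prefix_m1 _; apply: prefix_mono.
move=> lt_lm; have le_lN : (l <= N)%N by rewrite (leq_trans (ltnW lt_lm)).
rewrite -subr_ge0 -opprB qgrad_succ // -mulrN mulr_ge0 ?coef_ge0 // opprB subr_ge0.
apply: le_trans (prefix_m (leq_ltn_trans (leq0n l) lt_lm)); exact: prefix_mono.
Qed.

Definition combo (alpha : 'I_N.+2 -> R) (j : 'I_N.+1) : R :=
  \sum_(i < N.+2) alpha i * xshift i j.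

Definition nu_opt (alpha : 'I_N.+2 -> R) (j : 'I_N.+1) : R :=
  Num.max 0 (combo alpha j - y j).

Lemma resid_nu_opt alpha j :
  resid xshift y (nu_opt alpha) alpha j = Num.max 0 (y j - combo alpha j).
Proof.
by rewrite /resid /nu_opt -/(combo alpha j) !maxEle; case: lerP => ?; case: lerP => ?; lra.
Qed.

Lemma nu_opt_ge0 alpha j : 0 <= nu_opt alpha j.
Proof. by rewrite le_max lexx. Qed.

Lemma resid_nu_opt_ge0 alpha j : 0 <= resid xshift y (nu_opt alpha) alpha j.
Proof. by rewrite resid_nu_opt le_max lexx. Qed.

Lemma nu_opt_slack alpha j : nu_opt alpha j * resid xshift y (nu_opt alpha) alpha j = 0.
Proof.
rewrite resid_nu_opt /nu_opt !maxEle.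
by case: lerP => ?; case: lerP => ?; rewrite ?mulr0 ?mul0r //; nra.
Qed.

Lemma ratio_nu_opt_ge0 alpha j : 0 <= ratio (nu_opt alpha) alpha j.
Proof. by rewrite divr_ge0 ?resid_nu_opt_ge0 ?ltW ?rgap_gt0 // ltnW. Qed.

Definition two_point (m : nat) (a : R) (i : 'I_N.+2) : R :=
  if val i == m then 1 - a else if val i == m.+1 then a else 0.

Lemma two_point_eq0 m a (i : 'I_N.+2) :
  val i != m -> val i != m.+1 -> two_point m a i = 0.
Proof. by rewrite /two_point => /negbTE -> /negbTE ->. Qed.

Lemma sum_two_point (F : nat -> R) m a : (m <= N)%N ->
  \sum_(i < N.+2) two_point m a i * F i = (1 - a) * F m + a * F m.+1.
Proof.
move=> le_mN; have lt_m1 : (m.+1 < N.+2)%N by rewrite !ltnS.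
rewrite (bigD1 (Ordinal (ltnW lt_m1))) // (bigD1 (Ordinal lt_m1)) /=; last first.
  by rewrite -val_eqE /= (gtn_eqF (ltnSn m)).
rewrite big1 ?addr0 => [|i /andP[ne_im ne_im1]]; last first.
  by rewrite two_point_eq0 ?mul0r.
by rewrite /two_point /= eqxx (gtn_eqF (ltnSn m)) eqxx.
Qed.

Lemma two_point_shift m : two_point m 1 = two_point m.+1 0.
Proof.
apply: boolp.funext => i; rewrite /two_point.
case: (eqVneq (val i) m) => [->|ne_im].
  by rewrite subrr (ltn_eqF (ltnSn m)) (ltn_eqF (leqW (ltnSn m))).
by rewrite subr0; case: ifP => // _; case: ifP.
Qed.

Definition tp_prefix (m : nat) (a : R) : nat -> R :=
  prefix (nu_opt (two_point m a)) (two_point m a).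

Lemma tp_prefix_mono m a l l' : (l <= l')%N -> tp_prefix m a l <= tp_prefix m a l'.
Proof. exact/prefix_mono/ratio_nu_opt_ge0. Qed.

Definition kkt_two_point (m : nat) (a : R) : Prop :=
  [/\ (0 < m)%N -> tp_prefix m a m <= 1, 1 <= tp_prefix m a m.+1
    & a = 0 \/ tp_prefix m a m.+1 = 1].

Lemma two_point_optimal m a : (m <= N)%N -> 0 <= a <= 1 -> kkt_two_point m a ->
  optimal_W R N L zeta y (nu_opt (two_point m a)) (two_point m a).
Proof.
move=> le_mN /andP[a_ge0 a_le1] [prefix_m prefix_m1 a0_or_prefix1].
set alpha := two_point m a.
have alpha_ge0 i : 0 <= alpha i.
  by rewrite /alpha /two_point; case: ifP => _; [lra | case: ifP].
have sum_alpha : \sum_(i < N.+2) alpha i = 1.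
  have := sum_two_point (fun=> 1) a le_mN; rewrite !mulr1 subrK => <-.
  by apply: eq_bigr => i _; rewrite mulr1.
have grad_min := qgrad_min (ratio_nu_opt_ge0 alpha) le_mN prefix_m prefix_m1.
split; first by split; [exact: nu_opt_ge0 | split].
move=> nu' alpha' [nu'_ge0 [alpha'_ge0 sum_alpha']]; rewrite !wfunE.
apply: (qobj_min_of_kkt (lam := grad (nu_opt alpha) alpha m)) => //.
- exact: ltW.
- exact: resid_nu_opt_ge0.
- exact: nu_opt_slack.
- by move=> i; apply: grad_min; rewrite -ltnS.
move=> i; rewrite /alpha /two_point; case: eqP => [-> //|_].
case: eqP => [eq_im1|_]; last by rewrite !mul0r.
case: a0_or_prefix1 => [->|prefix1]; first by rewrite !mul0r.
congr (_ * _); apply/eqP; rewrite -subr_eq0 eq_im1 qgrad_succ //.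
by rewrite -/(tp_prefix m a m.+1) prefix1 subrr mulr0.
Qed.

Lemma one_le_tp_prefix (k : 'I_N.+1) : 0 <= y k -> 1 <= tp_prefix k 0 k.
Proof.
move=> yk_ge0; have le_kN : (k <= N)%N by rewrite -ltnS.
have le_kN1 : (k <= N.+1)%N by exact: ltnW.
have rgap_k_gt0 := rgap_gt0 le_kN1.
have xshift_kk : xshift k k = - rgap k.
  rewrite xshiftE leqnn -opprB -/(gap k) -(rgap_sqr le_kN1) expr2.
  by rewrite mulNr mulfK ?gt_eqF.
have ratio_k : 1 <= ratio (nu_opt (two_point k 0)) (two_point k 0) k.
  rewrite /ratio resid_nu_opt /combo (sum_two_point (xshift^~ k) 0 le_kN).
  rewrite subr0 mul1r mul0r addr0 xshift_kk opprK ler_pdivlMr // mul1r.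
  by rewrite le_max lerDr yk_ge0 orbT.
rewrite /tp_prefix /prefix (bigD1 k) //=; apply: le_trans ratio_k _.
by rewrite lerDl sumr_ge0 // => j _; apply: ratio_nu_opt_ge0.
Qed.

Lemma tp_prefix_continuous m l : (m <= N)%N -> continuous (fun a => tp_prefix m a l).
Proof.
move=> le_mN.
have -> : (fun a => tp_prefix m a l) = fun a => \sum_(j < N.+1 | (j <= l)%N)
    Num.max 0 (y j - ((1 - a) * xshift m j + a * xshift m.+1 j)) / rgap j.
  apply: boolp.funext => a; apply: eq_bigr => j _.
  by rewrite /ratio resid_nu_opt /combo (sum_two_point (xshift^~ j) a le_mN).
apply: continuous_big => [|j _ a]; first exact: add_continuous.
apply: cvgM; last exact: cvg_cst.
have affine_cont : continuous (fun a : R => y j - ((1 - a) * xshift m j + a * xshift m.+1 j)).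
  move=> b; apply: cvgB; first exact: cvg_cst.
  by apply: cvgD; apply: cvgM; try exact: cvg_cst; try exact: cvg_id;
    apply: cvgB; [exact: cvg_cst | exact: cvg_id].
exact: (@continuous_max R R (cst 0) _ a (@cst_continuous _ _ 0 a) (affine_cont a)).
Qed.

Lemma exists_kkt_two_point (k : 'I_N.+1) : 0 <= y k ->
  exists m a, [/\ (m <= k)%N, a = 0 \/ (m < k)%N, 0 <= a <= 1 & kkt_two_point m a].
Proof.
move=> yk_ge0; have le_kN : (k <= N)%N by rewrite -ltnS.
have a01 : 0 <= (0 : R) <= 1 by rewrite lexx ler01.
have [|[|n] /andP[le_mk prefix_m] min_m] :=
  ex_minnP (P := fun m => (m <= k)%N && (1 <= tp_prefix m 0 m)).
- by exists k; rewrite leqnn one_le_tp_prefix.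
- exists 0%N, 0; split; [by [] | by left | exact: a01 | split=> //; last by left].
  exact: le_trans prefix_m (tp_prefix_mono _ _ _).
have le_nN : (n <= N)%N by rewrite (leq_trans (ltnW le_mk)).
have prefix_n_lt1 : tp_prefix n 0 n < 1.
  rewrite ltNge; apply/negP => prefix_n.
  by have := min_m n; rewrite ltnW //= prefix_n ltnn => /(_ isT).
have [prefix_n1|prefix_n1] := lerP 1 (tp_prefix n 0 n.+1).
  exists n, 0; split; [exact: ltnW | by left | exact: a01 | split=> //; last by left].
  by move=> _; apply: ltW.
have prefix_at1 : tp_prefix n 1 n.+1 = tp_prefix n.+1 0 n.+1.
  by rewrite /tp_prefix two_point_shift.
have crossing : Num.min (tp_prefix n 0 n.+1) (tp_prefix n 1 n.+1) <= 1
    <= Num.max (tp_prefix n 0 n.+1) (tp_prefix n 1 n.+1).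
  by rewrite ge_min (ltW prefix_n1) le_max prefix_at1 prefix_m orbT.
have [c] := IVT ler01
  (continuous_subspaceT (tp_prefix_continuous (l := n.+1) le_nN)) crossing.
rewrite in_itv /= => c01 prefix_c.
exists n, c; split; [exact: ltnW | by right | exact: c01 | split; last by right].
- by move=> _; rewrite -prefix_c tp_prefix_mono.
- by rewrite prefix_c.
Qed.

End TwoPointOptimum.

Theorem theorem2 (R : realType) (N : nat) (L : R) (zeta : nat -> R)
    (ybar : 'I_N.+1 -> R) (k : 'I_N.+1) :
  (0 < N)%N -> 0 < L ->
  (forall i : nat, (i <= N.+1)%N -> zeta i.+1 < zeta i) ->
  zeta N.+2 = 0 ->
  0 <= ybar k ->
  exists (nu : 'I_N.+1 -> R) (alpha : 'I_N.+2 -> R),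
    optimal_W R N L zeta ybar nu alpha /\
    exists m : nat, (m <= N)%N /\
      (forall i : 'I_N.+2, (val i < m)%N || (m.+1 < val i)%N -> alpha i = 0) /\
      (forall i j : 'I_N.+2, val i = m -> val j = m.+1 -> alpha j = 1 - alpha i) /\
      (forall i : 'I_N.+2, (k < val i)%N -> alpha i = 0).
Proof.
move=> _ L_gt0 zeta_decr zeta_last yk_ge0.
have [m [a [le_mk a0_or_lt_mk a01 kkt]]] :=
  exists_kkt_two_point L_gt0 zeta_decr yk_ge0.
have le_mN : (m <= N)%N by rewrite -ltnS (leq_ltn_trans le_mk).
exists (nu_opt L zeta ybar (two_point m a)), (two_point m a).
split; first exact: two_point_optimal.
exists m; split=> //; split; [|split].
- move=> i /orP[lt_im|lt_m1i]; apply: two_point_eq0.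
  + by rewrite ltn_eqF.
  + by rewrite ltn_eqF // ltnW.
  + by rewrite gtn_eqF // ltnW.
  + by rewrite gtn_eqF.
- move=> i j eq_im eq_jm1.
  by rewrite /two_point eq_im eq_jm1 eqxx (gtn_eqF (ltnSn m)) eqxx; ring.
move=> i lt_ki; rewrite /two_point gtn_eqF ?(leq_ltn_trans le_mk) //.
case: eqP => // eq_im1; case: a0_or_lt_mk => // lt_mk.
by move: lt_ki; rewrite eq_im1 ltnNge lt_mk.
Qed.
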